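(* Let $q$ be a prime power and let $n_1,n_2$ be odd positive integers, each coprime to $q$. If every irreducible monic factor of $x^{n_1}-1$ and every irreducible monic factor of $x^{n_2}-1$ in $\mathbb{F}_{q^2}[x]$ is SCRIM, then every irreducible monic factor of $x^{n_1n_2}-1$ in $\mathbb{F}_{q^2}[x]$ is SCRIM.
   Context: $\mathbb{F}_{q^2}$ is the finite field with $q^2$ elements. For $\alpha\in\mathbb{F}_{q^2}$ put $\bar\alpha=\alpha^q$, and for $f(x)=\sum_i f_ix^i$ put $\overline{f(x)}=\sum_i \bar f_i x^i$. For $f(x)$ with $f(0)\neq 0$, $f^*(x)=x^{\deg f}f(0)^{-1}f(1/x)$ and $f^\dagger(x)=\overline{f^*(x)}$. A polynomial is SCRIM if it is monic, irreducible over $\mathbb{F}_{q^2}$, has nonzero constant term, and satisfies $f=f^\dagger$. *)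

From HB Require Import structures.
From mathcomp Require Import all_boot all_order all_algebra all_field.
Set Implicit Arguments. Unset Strict Implicit. Unset Printing Implicit Defensive.
Import GRing.Theory.
Local Open Scope ring_scope.

(* Conjugation on F_{q^2}: alpha |-> alpha^q, applied coefficientwise. *)
Definition conj_poly (F : fieldType) (q : nat) (f : {poly F}) : {poly F} :=
  map_poly (fun a : F => a ^+ q) f.

(* f^*(x) = x^{deg f} f(0)^{-1} f(1/x): the normalized reciprocal polynomial.
   Coefficient i of x^{deg f} f(1/x) is f_{deg f - i}. *)
Definition recip (F : fieldType) (f : {poly F}) : {poly F} :=
  (f`_0)^-1 *: \poly_(i < size f) f`_((size f).-1 - i).

Definition dagger (F : fieldType) (q : nat) (f : {poly F}) : {poly F} :=
  conj_poly q (recip f).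

Definition SCRIM (F : fieldType) (q : nat) (f : {poly F}) : Prop :=
  [/\ f \is monic, irreducible_poly f, f`_0 != 0 & f = dagger q f].

Definition prime_power (q : nat) : Prop :=
  exists p k : nat, [/\ prime p, (0 < k)%N & q = (p ^ k)%N].

Definition all_factors_SCRIM (F : fieldType) (q n : nat) : Prop :=
  forall f : {poly F}, f \is monic -> irreducible_poly f ->
    f %| 'X^n - 1 -> SCRIM q f.

From HB Require Import structures.
From mathcomp Require Import all_boot all_order all_algebra all_fingroup all_solvable all_field.
From mathcomp Require Import zify ring.
Set Implicit Arguments. Unset Strict Implicit. Unset Printing Implicit Defensive.
Import GRing.Theory.
Local Open Scope ring_scope.

(* Let a be a root, in a splitting field over F_(q^2), of an irreducible monic
   factor f of x^n - 1.  The roots of f are the Frobenius conjugates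
   a^(q^(2j)), and f^dagger vanishes at a^(-q); so f = f^dagger exactly when
   a^(-q) = a^(q^(2j)) for some j.  Taking for a a primitive n-th root of
   unity shows that, for n coprime to q, all irreducible factors of x^n - 1
   are SCRIM iff n divides q^k + 1 for some odd k.  That property is
   multiplicative on odd n: if n1 and n2 divide Q + 1 with Q = q^(k1 k2), so
   do lcm(n1, n2) and the odd number g = gcd(n1, n2); since (Q^g + 1)/(Q + 1)
   is congruent to g modulo Q + 1, n1 n2 = lcm(n1, n2) g divides Q^g + 1. *)

Lemma exp_odd_add1_factor (R : comNzRingType) (x : R) m : odd m ->
  exists2 S, x ^+ m + 1 = (x + 1) * S & exists t, S = (x + 1) * t + m%:R.
Proof.
move=> odd_m; rewrite -(odd_double_half m) odd_m add1n.
elim: m./2 => [|j [S DS [t Dt]]].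
  by exists 1; [rewrite mulr1 | exists 0; rewrite mulr0 add0r].
have xS : x ^+ j.*2.+1 = (x + 1) * S - 1 by rewrite -DS addrK.
exists (x ^+ 2 * S - x + 1).
  by rewrite doubleS exprSr exprS xS; ring.
exists (x ^+ 2 * t + j.*2.+1%:R * (x - 1) - 1).
rewrite Dt (_ : (j.+1).*2.+1 = j.*2.+1 + 2)%N ?natrD; [ring | lia].
Qed.

Lemma dvdn_exp_odd_add1 x m k : odd k -> (m %| x + 1)%N -> (m %| x ^ k + 1)%N.
Proof.
move=> odd_k m_dvd; have [S DS _] := exp_odd_add1_factor (x%:Z) odd_k.
suff : (m%:Z %| (x ^ k + 1)%N%:Z)%Z by [].
by rewrite PoszD -natz natrX natz DS dvdz_mulr.
Qed.

Lemma dvdn_mul_exp_odd_add1 x l g : odd g -> (l %| x + 1)%N -> (g %| x + 1)%N ->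
  (l * g %| x ^ g + 1)%N.
Proof.
move=> odd_g l_dvd g_dvd.
have [S DS [t Dt]] := exp_odd_add1_factor (x%:Z) odd_g.
suff : (l%:Z * g%:Z %| (x ^ g + 1)%N%:Z)%Z by [].
rewrite PoszD -natz natrX natz DS dvdz_mul //.
by rewrite Dt natz rpredD ?dvdz_mulr ?dvdzz.
Qed.

Definition oddly_good (q n : nat) : Prop := exists2 k, odd k & (n %| q ^ k + 1)%N.

Lemma oddly_good_mul q n1 n2 : odd n1 ->
  oddly_good q n1 -> oddly_good q n2 -> oddly_good q (n1 * n2).
Proof.
move=> odd_n1 [k1 odd_k1 dvd_n1] [k2 odd_k2 dvd_n2].
set Q := (q ^ (k1 * k2))%N.
have n1_dvd : (n1 %| Q + 1)%N by rewrite /Q expnM dvdn_exp_odd_add1.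
have n2_dvd : (n2 %| Q + 1)%N by rewrite /Q mulnC expnM dvdn_exp_odd_add1.
have odd_gcd : odd (gcdn n1 n2).
  by apply: contraLR odd_n1; rewrite -!dvdn2 => /dvdn_trans->; rewrite ?dvdn_gcdl.
exists (k1 * k2 * gcdn n1 n2)%N; first by rewrite !oddM odd_k1 odd_k2.
rewrite -muln_lcm_gcd expnM dvdn_mul_exp_odd_add1 ?dvdn_lcm ?n1_dvd ?n2_dvd //.
exact: dvdn_trans (dvdn_gcdl _ _) n1_dvd.
Qed.

Lemma oddly_good_dvd_exp_double_add q n j : coprime n q ->
  (n %| q ^ j.*2 + q)%N -> oddly_good q n.
Proof.
case: j => [|j] co_nq; first by exists 1%N; rewrite // addnC.
have -> : (q ^ j.+1.*2 + q = q * (q ^ j.*2.+1 + 1))%N.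
  by rewrite doubleS expnS mulnDr muln1.
rewrite Gauss_dvdr // => n_dvd.
by exists j.*2.+1; rewrite /= ?odd_double.
Qed.

Lemma natf_neq0_coprime (R : nzRingType) p n m :
  p \in [pchar R] -> (p %| m)%N -> coprime n m -> n%:R != 0 :> R.
Proof.
move=> pR p_dvd_m co_nm.
rewrite -(dvdn_pcharf pR) -prime_coprime ?(pcharf_prime pR) // coprime_sym.
exact: coprime_dvdr p_dvd_m co_nm.
Qed.

Lemma horner_map_exp_pchar (R : comNzRingType) q (p : {poly R}) x :
  [pchar R].-nat q -> (map_poly (fun a => a ^+ q) p).[x ^+ q] = p.[x] ^+ q.
Proof.
move=> pchar_q; have /andP[q_gt0 _] := pchar_q.
rewrite horner_poly horner_coef (big_morph (fun a => a ^+ q) (id1 := 0) (op1 := +%R)).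
- by apply: eq_bigr => i _; rewrite exprMn -!exprM mulnC.
- by move=> a b; rewrite exprDn_pchar.
- by rewrite expr0n gtn_eqF.
Qed.

Section Reciprocal.
Variable K : fieldType.
Implicit Types (p : {poly K}) (a : K).

Lemma horner_recip p a : a != 0 ->
  a ^+ (size p).-1 * (recip p).[a^-1] = (p`_0)^-1 * p.[a].
Proof.
move=> a_neq0; rewrite /recip hornerZ horner_poly mulrCA mulr_sumr.
congr (_ * _); rewrite horner_coef (reindex_inj rev_ord_inj) /=.
apply: eq_bigr => i _; rewrite (_ : size p - i.+1 = (size p).-1 - i)%N; last by lia.
have le_i : (i <= (size p).-1)%N by rewrite -ltnS (leq_trans (ltn_ord i)) ?leqSpred.
rewrite subKn // -{1}(subnK le_i) exprD exprVn.
by rewrite mulrAC mulrCA mulfV ?mulr1 // expf_neq0.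
Qed.

Lemma root_recip p a : a != 0 -> root p a -> root (recip p) a^-1.
Proof.
move=> a_neq0 /rootP pa0; apply/rootP.
have /eqP := horner_recip p a_neq0; rewrite pa0 mulr0 mulf_eq0.
by rewrite expf_eq0 (negPf a_neq0) andbF => /eqP.
Qed.

Lemma size_recip p : p`_0 != 0 -> size (recip p) = size p.
Proof. by move=> p0_neq0; rewrite size_scale ?invr_eq0 ?size_poly_eq ?subnn. Qed.

Lemma lead_coef_recip p : p`_0 != 0 -> lead_coef (recip p) = 1.
Proof.
move=> p0_neq0; have p_gt0 : (0 < size p)%N.
  by rewrite size_poly_gt0; apply: contraNneq p0_neq0 => ->; rewrite coef0.
by rewrite lead_coefE size_recip // coefZ coef_poly prednK // leqnn subnn mulVf.
Qed.

End Reciprocal.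

Section Dagger.
Variables (K : fieldType) (q : nat).
Hypothesis q_gt0 : (0 < q)%N.
Implicit Types (p : {poly K}) (a : K).

Lemma coef_dagger p i : (dagger q p)`_i =
  if (i < size p)%N then ((p`_0)^-1 * p`_((size p).-1 - i)) ^+ q else 0.
Proof.
rewrite /dagger /conj_poly coef_map_id0 /= ?expr0n ?gtn_eqF //.
by rewrite coefZ coef_poly; case: ifP; rewrite ?mulr0 ?expr0n ?gtn_eqF.
Qed.

Lemma size_dagger p : p`_0 != 0 -> size (dagger q p) = size p.
Proof.
move=> p0_neq0; rewrite size_map_poly_id0 ?size_recip //.
by rewrite lead_coef_recip // expr1n oner_eq0.
Qed.

Lemma dagger_monic p : p`_0 != 0 -> dagger q p \is monic.
Proof.
move=> p0_neq0; rewrite monicE lead_coef_map_id0 /= ?lead_coef_recip ?expr1n ?oner_eq0 //.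
by rewrite expr0n gtn_eqF.
Qed.

End Dagger.

Lemma map_dagger (K L : fieldType) (f : {rmorphism K -> L}) q (p : {poly K}) :
  (0 < q)%N -> map_poly f (dagger q p) = dagger q (map_poly f p).
Proof.
move=> q_gt0; apply/polyP => i.
rewrite coef_map_id0 ?rmorph0 // !coef_dagger // size_map_poly.
by case: ifP; rewrite ?rmorph0 // rmorphXn rmorphM fmorphV !coef_map.
Qed.

Lemma root_dagger (K : fieldType) q (p : {poly K}) a : [pchar K].-nat q ->
  a != 0 -> root p a -> root (dagger q p) (a^-1 ^+ q).
Proof.
move=> pchar_q a_neq0 pa0; have /andP[q_gt0 _] := pchar_q.
rewrite /root /dagger /conj_poly horner_map_exp_pchar //.
by rewrite (rootP (root_recip a_neq0 pa0)) expr0n gtn_eqF.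
Qed.

Lemma map_polyXn_sub1 (R S : nzRingType) (f : {rmorphism R -> S}) n :
  map_poly f ('X^n - 1) = 'X^n - 1.
Proof. by rewrite rmorphB /= map_polyXn rmorph1. Qed.

Lemma coef0_neq0_dvdp_Xn_sub1 (R : idomainType) (f : {poly R}) n :
  (0 < n)%N -> f %| 'X^n - 1 -> f`_0 != 0.
Proof.
move=> n_gt0 f_dvd; apply/negP => /eqP f00.
have /(root_dvdp f_dvd) : root f 0 by rewrite /root horner_coef0 f00.
by rewrite /root !hornerE expr0n gtn_eqF // sub0r oppr_eq0 oner_eq0.
Qed.

Lemma split_poly_root (K : fieldType) (p : {poly K}) rs :
  (1 < size p)%N -> p %= \prod_(z <- rs) ('X - z%:P) -> exists z, root p z.
Proof.
case: rs => [|z rs] size_p Dp; last first.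
  by exists z; rewrite (eqp_root Dp) root_prod_XsubC mem_head.
by move: (eqp_size Dp) size_p; rewrite big_nil size_poly1 => ->.
Qed.

Lemma split_Xn_sub1_prim_root (K : fieldType) n (rs : seq K) : n%:R != 0 :> K ->
  'X^n - 1 %= \prod_(z <- rs) ('X - z%:P) -> exists z : K, n.-primitive_root z.
Proof.
move=> n_neq0 Drs; have n_gt0 : (0 < n)%N by case: n n_neq0 {Drs}; rewrite ?eqxx.
move: Drs; rewrite eqp_monic ?monic_Xn_sub_1 ?monic_prod_XsubC // => /eqP Drs.
have uniq_rs : uniq rs by rewrite -separable_prod_XsubC -Drs separable_Xn_sub_1.
have size_rs : size rs = n.
  by apply/eqP; rewrite -eqSS -(size_prod_XsubC rs id) -Drs size_Xn_sub_1.
have unity_rs : all n.-unity_root rs.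
  by apply/allP => z z_rs; rewrite /root_of_unity Drs root_prod_XsubC.
have /hasP[z _ prim_z] := has_prim_root n_gt0 unity_rs uniq_rs (eq_leq (esym size_rs)).
by exists z.
Qed.

Section FiniteSplittingField.
Variables (F : finFieldType) (L : splittingFieldType F).
Local Notation "p ^%:A" := (map_poly (in_alg L) p) (format "p ^%:A").
Implicit Types (f : {poly F}) (x y : L).

Lemma minPoly_irredp f x :
  f \is monic -> irreducible_poly f -> root f^%:A x -> minPoly 1 x = f^%:A.
Proof.
move=> mon_f irr_f fx0; have [g Dg] := polyOver1P (minPolyOver 1 x).
have mon_g : g \is monic by rewrite -(map_monic (in_alg L)) -Dg monic_minPoly.
have g_dvd_f : g %| f.
  rewrite -(dvdp_map (in_alg L)) -Dg minPoly_dvdp //; apply/polyOver1P.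
  by exists f.
have size_g : size g != 1%N.
  by rewrite -(size_map_poly (in_alg L)) -Dg size_minPoly.
by rewrite Dg; congr (_^%:A); apply/eqP; rewrite -eqp_monic //; exact: irr_f.2.
Qed.

Lemma minPoly_descent x :
  exists2 g, g \is monic /\ irreducible_poly g & minPoly 1 x = g^%:A.
Proof.
have [g Dg] := polyOver1P (minPolyOver 1 x); exists g => //; split.
  by rewrite -(map_monic (in_alg L)) -Dg monic_minPoly.
split=> [|h size_h h_dvd].
  by rewrite -(size_map_poly (in_alg L)) -Dg size_minPoly.
have hO : h^%:A \is a polyOver 1%VS by apply/polyOver1P; exists h.
have h_dvd_min : h^%:A %| minPoly 1 x by rewrite Dg dvdp_map.
have /orP[] := minPoly_irr hO h_dvd_min; first by rewrite Dg eqp_map.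
by move/eqp_size; rewrite size_map_poly size_poly1 => size_h1; rewrite size_h1 in size_h.
Qed.

Lemma root_irredp_Frobenius f x y :
    f \is monic -> irreducible_poly f -> root f^%:A x ->
  root f^%:A y <-> exists j, y = x ^+ (#|F| ^ j).
Proof.
move=> mon_f irr_f fx0; have Dfx := minPoly_irredp mon_f irr_f fx0.
have [s /eqP Gal_s Ds] := finField_galois_generator (sub1v {:L}).
have sX j : (s ^+ j)%g x = x ^+ (#|F| ^ j).
  elim: j => [|j IHj]; first by rewrite expg0 gal_id expn0 expr1.
  by rewrite expgSr galM ?memvf // IHj Ds ?memvf // dimv1 expn1 expnSr exprM.
split=> [fy0 | [j ->]].
  have normal_L : normalField 1 {:L} by have /and3P[] := finField_galois (sub1v {:L}).
  have min_y : root (minPoly 1 x) y by rewrite Dfx.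
  have [t Gal_t <-] := normalField_root_minPoly (sub1v _) normal_L (memvf x) min_y.
  by move: Gal_t; rewrite Gal_s => /cycleP[j ->]; exists j.
rewrite -sX -Dfx root_minPoly_gal ?sub1v ?memvf // Gal_s.
by rewrite groupX ?cycle_id.
Qed.

Variable q : nat.
Hypothesis pchar_q : [pchar F].-nat q.

Lemma root_dagger_map f a :
  a != 0 -> root f^%:A a -> root (dagger q f)^%:A (a^-1 ^+ q).
Proof.
have /andP[q_gt0 _] := pchar_q.
by move=> a_neq0 fa0; rewrite map_dagger ?root_dagger ?(eq_pnat _ (pchar_lalg L)).
Qed.

Lemma irredp_eq_dagger f a :
    f \is monic -> irreducible_poly f -> f`_0 != 0 -> a != 0 ->
  root f^%:A a -> root f^%:A (a^-1 ^+ q) -> f = dagger q f.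
Proof.
move=> mon_f irr_f f0_neq0 a_neq0 fa0 fb0; have /andP[q_gt0 _] := pchar_q.
have f_dvd : f %| dagger q f.
  rewrite -(dvdp_map (in_alg L)) -(minPoly_irredp mon_f irr_f fb0).
  rewrite minPoly_dvdp ?root_dagger_map //.
  by apply/polyOver1P; exists (dagger q f).
apply/eqP; rewrite -eqp_monic ?dagger_monic //.
by rewrite -dvdp_size_eqp // size_dagger.
Qed.

End FiniteSplittingField.

Section SCRIMFactors.
Variables (F : finFieldType) (q : nat).
Hypotheses (card_F : #|F| = (q ^ 2)%N) (pchar_q : [pchar F].-nat q).

Lemma oddly_good_all_factors_SCRIM n : oddly_good q n -> all_factors_SCRIM F q n.
Proof.
move=> [k odd_k n_dvd] f mon_f irr_f f_dvd.
have n_gt0 : (0 < n)%N by case: n n_dvd {f_dvd} => //; rewrite dvd0n addn1.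
have [L [rs Drs _]] := FinSplittingFieldFor (irredp_neq0 irr_f).
have [a fa0] : exists a, root (map_poly (in_alg L) f) a.
  by apply: split_poly_root Drs; rewrite size_map_poly; case: irr_f.
have an1 : a ^+ n = 1.
  have fL_dvd : map_poly (in_alg L) f %| 'X^n - 1.
    by rewrite -(map_polyXn_sub1 (in_alg L)) dvdp_map.
  by have /rootP := root_dvdp fL_dvd fa0; rewrite !hornerE => /subr0_eq.
have a_neq0 : a != 0.
  by apply: contra_eq_neq an1 => ->; rewrite expr0n gtn_eqF // eq_sym oner_eq0.
have a_inv : a^-1 = a ^+ (q ^ k).
  have [c Dc] := dvdnP n_dvd; apply: (mulIf a_neq0).
  by rewrite mulVf // -exprSr -addn1 Dc mulnC exprM an1 expr1n.
have fb0 : root (map_poly (in_alg L) f) (a^-1 ^+ q).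
  apply/(root_irredp_Frobenius _ mon_f irr_f fa0); exists (uphalf k).
  rewrite a_inv -exprM -expnSr card_F -expnM; congr (a ^+ (q ^ _)).
  by rewrite uphalf_half odd_k -[in LHS](odd_double_half k) odd_k -mul2n; lia.
have f0_neq0 := coef0_neq0_dvdp_Xn_sub1 n_gt0 f_dvd.
split=> //; exact: (irredp_eq_dagger pchar_q mon_f irr_f f0_neq0 a_neq0 fa0 fb0).
Qed.

Lemma all_factors_SCRIM_oddly_good n : coprime n q -> n%:R != 0 :> F ->
  all_factors_SCRIM F q n -> oddly_good q n.
Proof.
move=> co_nq n_neq0 SCRIM_n.
have n_gt0 : (0 < n)%N by case: n n_neq0 {co_nq SCRIM_n}; rewrite ?eqxx.
have Xn_sub1_neq0 : 'X^n - 1 != 0 :> {poly F} by rewrite -size_poly_gt0 size_Xn_sub_1.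
have [L [rs Drs _]] := FinSplittingFieldFor Xn_sub1_neq0.
have n_neq0_L : n%:R != 0 :> L by rewrite -(rmorph_nat (in_alg L)) fmorph_eq0.
rewrite map_polyXn_sub1 in Drs; have [z prim_z] := split_Xn_sub1_prim_root n_neq0_L Drs.
have [g [mon_g irr_g] Dg] := minPoly_descent z.
have z_n1 : z ^+ n = 1 := prim_expr_order prim_z.
have g_dvd : g %| 'X^n - 1.
  rewrite -(dvdp_map (in_alg L)) map_polyXn_sub1 -Dg minPoly_dvdp //.
    by apply/polyOver1P; exists ('X^n - 1); rewrite map_polyXn_sub1.
  by rewrite /root !hornerE z_n1 subrr.
have [_ _ g0_neq0 g_dagger] := SCRIM_n g mon_g irr_g g_dvd.
have gz0 : root (map_poly (in_alg L) g) z by rewrite -Dg root_minPoly.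
have z_neq0 : z != 0.
  by apply: contra_eq_neq z_n1 => ->; rewrite expr0n gtn_eqF // eq_sym oner_eq0.
have := root_dagger_map pchar_q z_neq0 gz0; rewrite -g_dagger.
case/(root_irredp_Frobenius _ mon_g irr_g gz0) => j zq.
apply: (@oddly_good_dvd_exp_double_add _ _ j co_nq).
by rewrite (prim_order_dvd prim_z) -mul2n expnM -card_F exprD -zq -exprMn mulVf ?expr1n.
Qed.

End SCRIMFactors.

Theorem theorem2p12 (q : nat) (F : finFieldType) (n1 n2 : nat) :
  prime_power q -> #|F| = (q ^ 2)%N ->
  odd n1 -> odd n2 -> coprime n1 q -> coprime n2 q ->
  all_factors_SCRIM F q n1 -> all_factors_SCRIM F q n2 ->
  all_factors_SCRIM F q (n1 * n2).
Proof.
move=> [p [k [p_pr k_gt0 q_pk]]] card_F odd_n1 odd_n2 co_n1 co_n2 SCRIM_n1 SCRIM_n2.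
have pF : p \in [pchar F].
  by apply: (card_finPcharP (n := (k * 2)%N)); rewrite // card_F q_pk expnM.
have pchar_q : [pchar F].-nat q by rewrite q_pk (eq_pnat _ (pcharf_eq pF)) pnatX pnat_id.
have p_dvd_q : (p %| q)%N by rewrite q_pk dvdn_exp.
have good_n1 := all_factors_SCRIM_oddly_good card_F pchar_q co_n1
  (natf_neq0_coprime pF p_dvd_q co_n1) SCRIM_n1.
have good_n2 := all_factors_SCRIM_oddly_good card_F pchar_q co_n2
  (natf_neq0_coprime pF p_dvd_q co_n2) SCRIM_n2.
exact: (oddly_good_all_factors_SCRIM card_F pchar_q
  (oddly_good_mul odd_n1 good_n1 good_n2)).
Qed.
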